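(* Let $r$ and $k$ be positive integers and $x\ge1$, $y$ real. Define $$R(r,k,x)=\sum_{\substack{y<r<q_1<\cdots<q_k\le x\\ r\mid q_1-1,\ q_1\mid q_2-1,\ \dots,\ q_{k-1}\mid q_k-1}}\frac{1}{q_k},$$ where $q_1,\dots,q_k$ range over primes. Then $R(r,k,x)\le\frac{(\log x+1)^k}{r}$. Consequently, $$S(r,k,x):=\sum_{\substack{y<r<q_1<\cdots<q_k\le n\le x\\ r\mid q_1-1,\ q_1\mid q_2-1,\ \dots,\ q_{k-1}\mid q_k-1,\ q_k\mid n}}1\ \le\ \frac{x(\log x+1)^k}{r},$$ where $q_1,\dots,q_k$ range over primes and $n$ over positive integers. *)

From HB Require Import structures.
From mathcomp Require Import all_boot all_order all_algebra.
From mathcomp Require Import all_classical all_reals all_analysis.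
Set Implicit Arguments. Unset Strict Implicit. Unset Printing Implicit Defensive.
Import Order.TTheory GRing.Theory Num.Theory.
Local Open Scope ring_scope.

Definition qseq (k M : nat) (q : {ffun 'I_k -> 'I_M}) : seq nat :=
  [seq val (q i) | i <- enum 'I_k].

Definition good_chain (R : realType) (y : R) (r k : nat) (x : R) (M : nat)
    (q : {ffun 'I_k -> 'I_M}) : bool :=
  let s := qseq q in
  [&& y < r%:R,
      sorted ltn (r :: s)%N,
      all prime s,
      all (fun p : nat => p%:R <= x) s &
      path (fun a b : nat => (a %| b - 1)%N) r s].

(* Bound for the ranges: every integer m with m <= x satisfies m < truncn x + 1. *)
Definition bnd (R : realType) (x : R) : nat := (Num.truncn x).+1.

Definition qlast (k M : nat) (r : nat) (q : {ffun 'I_k -> 'I_M}) : nat :=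
  last r (qseq q).

Definition Rsum (R : realType) (y : R) (r k : nat) (x : R) : R :=
  \sum_(q : {ffun 'I_k -> 'I_(bnd x)} | good_chain y r x q)
     ((qlast r q)%:R)^-1.

Definition Ssum (R : realType) (y : R) (r k : nat) (x : R) : R :=
  \sum_(q : {ffun 'I_k -> 'I_(bnd x)} | good_chain y r x q)
    \sum_(n < bnd x | [&& (0 < val n)%N, (qlast r q <= val n)%N, (val n)%:R <= x
                         & (qlast r q %| val n)%N]) 1.

From HB Require Import structures.
From mathcomp Require Import all_boot all_order all_algebra.
From mathcomp Require Import all_classical all_reals all_analysis.
From mathcomp Require Import ring zify.
Import Order.TTheory GRing.Theory Num.Theory.
Local Open Scope ring_scope.

(* Forgetting primality and [y < r], chains are built by choosing
   [q_1 = 1 + j r] with [r < q_1 <= x] and then a chain of length [k - 1] above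
   [q_1]; hence [R(r,k,x) <= sum_(q_1) R(q_1,k-1,x)].  Since
   [1/q_1 <= 1/(j r)] and [q_1 |-> j] is injective, the sum of [1/q_1] is at
   most [(1 + log x)/r] by the harmonic bound, and induction on [k] gives the
   first estimate.  A chain ending at [q_k] contributes at most [x/q_k] values
   of [n] to [S], whence [S <= x R]. *)

Lemma ler_sum_inj (R : numDomainType) (I J : finType) (h : I -> J)
    (P : pred I) (Q : pred J) (g : J -> R) :
  {in P &, injective h} -> (forall i, P i -> Q (h i)) ->
  (forall j, Q j -> 0 <= g j) ->
  \sum_(i | P i) g (h i) <= \sum_(j | Q j) g j.
Proof.
move=> h_inj PQ g_ge0.
have -> : \sum_(i | P i) g (h i) = \sum_(j | Q j && (j \in h @: P)) g j.
  rewrite -(big_imset _ h_inj); apply: eq_bigl => j.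
  apply/idP/andP => [jP|[]//]; split=> //.
  by case/imsetP: jP => i iP ->; apply: PQ.
rewrite [leRHS](bigID (mem (h @: P))) /= lerDl.
by apply: sumr_ge0 => j /andP[/g_ge0].
Qed.

Section Harmonic.
Context {R : realType}.

Lemma inv_le_ln_succ (n : nat) : (0 < n)%N ->
  (n.+1%:R : R)^-1 <= ln n.+1%:R - ln n%:R.
Proof.
move=> n_gt0; rewrite -opprB lerNr -ln_div ?posrE ?ltr0n //.
have -> : n%:R / n.+1%:R = 1 + - (n.+1%:R : R)^-1.
  by rewrite -natr1; field; rewrite natr1 pnatr_eq0.
apply: le_ln1Dx; rewrite ltrN2 invf_lt1 ?ltr0n // ltr1n ltnS //.
Qed.

Lemma harmonic_le_1Dln (N : nat) : (0 < N)%N ->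
  \sum_(m < N.+1 | (0 < m)%N) (m%:R : R)^-1 <= 1 + ln N%:R.
Proof.
elim: N => // -[_ _|N IH _].
  by rewrite big_mkcond !big_ord_recr big_ord0 /= ln1 invr1 !add0r addr0.
rewrite big_mkcond big_ord_recr /= -big_mkcond.
apply: le_trans (lerD (IH isT) (@inv_le_ln_succ N.+1 isT)) _.
by rewrite -addrA subrKC.
Qed.

Lemma sum_inv_1_mod_le (t r : nat) : (0 < t)%N -> (0 < r)%N ->
  \sum_(a < t.+1 | (r < a)%N && (r %| a - 1)%N) (a%:R : R)^-1
    <= (1 + ln t%:R) / r%:R.
Proof.
move=> t_gt0 r_gt0.
pose h (a : 'I_t.+1) : 'I_t.+1 := inord ((a - 1) %/ r).
have hE (a : 'I_t.+1) : h a = ((a - 1) %/ r)%N :> nat.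
  rewrite inordK // ltnS (leq_trans (leq_div _ _)) //.
  by have := ltn_ord a; lia.
apply: (@le_trans _ _ (\sum_(a < t.+1 | (r < a)%N && (r %| a - 1)%N)
    (r%:R : R)^-1 * (h a)%:R^-1)).
  apply: ler_sum => a /andP[ra r_dvd]; rewrite hE -invfM -natrM mulnC divnK //.
  by rewrite lef_pV2 ?posrE ?ltr0n ?ler_nat; lia.
rewrite -mulr_sumr mulrC ler_wpM2r ?invr_ge0 //.
apply: le_trans _ (harmonic_le_1Dln t t_gt0).
apply: (@ler_sum_inj _ _ _ h _ (fun m : 'I_t.+1 => (0 < m)%N)).
- move=> a b /andP[ra ra_dvd] /andP[rb rb_dvd] /(congr1 val).
  rewrite /= !hE => /(congr1 (muln^~ r)); rewrite /= !divnK // => eq_ab.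
  by apply: val_inj => /=; lia.
- by move=> a /andP[ra r_dvd]; rewrite hE divn_gt0 //; lia.
- by move=> j _; rewrite invr_ge0.
Qed.

End Harmonic.

Lemma sum1_multiples (R : numDomainType) (t Q : nat) : (0 < Q)%N ->
  \sum_(n < t.+1 | (0 < n)%N && (Q %| n)%N) (1 : R) = (t %/ Q)%:R.
Proof.
move=> Q_gt0; elim: t => [|t IH].
  by rewrite big_mkcond big_ord1 div0n.
rewrite big_mkcond big_ord_recr /= -big_mkcond IH divnS // natrD addrC.
by case: (Q %| t.+1)%N.
Qed.

Definition ffun_cons {T : Type} {k : nat} (a : T) (g : {ffun 'I_k -> T}) :
    {ffun 'I_k.+1 -> T} :=
  [ffun i => if unlift ord0 i is Some j then g j else a].

Lemma big_ffunS (R : Type) (idx : R) (op : Monoid.com_law idx) (T : finType)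
    (k : nat) (P : pred {ffun 'I_k.+1 -> T}) (F : {ffun 'I_k.+1 -> T} -> R) :
  \big[op/idx]_(q | P q) F q =
  \big[op/idx]_(a : T) \big[op/idx]_(g | P (ffun_cons a g)) F (ffun_cons a g).
Proof.
rewrite pair_big_dep (reindex (fun p => ffun_cons p.1 p.2)) /=.
  by apply: eq_bigl => -[a g].
exists (fun q => (q ord0, [ffun j => q (lift ord0 j)])) => [[a g] _ | q _] /=.
  congr (_, _); first by rewrite ffunE unlift_none.
  by apply/ffunP => j; rewrite !ffunE liftK.
by apply/ffunP => i; rewrite ffunE; case: unliftP => [j ->|->]; rewrite ?ffunE.
Qed.

Lemma qseq_ffun_cons (k M : nat) (a : 'I_M) (g : {ffun 'I_k -> 'I_M}) :
  qseq (ffun_cons a g) = val a :: qseq g.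
Proof.
rewrite /qseq enum_ordSl /= ffunE unlift_none -map_comp; congr (_ :: _).
by apply: eq_map => j /=; rewrite ffunE liftK.
Qed.

Section Chains.
Context {R : realType}.
Implicit Types (x : R) (r k : nat).

Definition div_chain x r (s : seq nat) : bool :=
  [&& sorted ltn (r :: s), all (fun p : nat => p%:R <= x) s &
      path (fun a b : nat => (a %| b - 1)%N) r s].

Lemma div_chain_cons x r a s :
  div_chain x r (a :: s) =
  [&& (r < a)%N, a%:R <= x, (r %| a - 1)%N & div_chain x a s].
Proof.
rewrite /div_chain /=.
by case: (r < a)%N; case: (a%:R <= x); case: (r %| a - 1)%N; rewrite ?andbF.
Qed.

(* [R(r,k,x)] without the conditions [y < r] and primality, so that it
   satisfies the recursion [chain_sumS]. *)
Definition chain_sum x r k : R :=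
  \sum_(q : {ffun 'I_k -> 'I_(bnd x)} | div_chain x r (qseq q))
    (last r (qseq q))%:R^-1.

Lemma chain_sum0 x r : chain_sum x r 0 = r%:R^-1.
Proof.
have qseq0 (q : {ffun 'I_0 -> 'I_(bnd x)}) : qseq q = [::].
  by rewrite /qseq enum_ord0.
rewrite /chain_sum; under eq_bigl => q do rewrite qseq0.
under eq_bigr => q _ do rewrite qseq0.
by rewrite sumr_const card_ffun !card_ord expn0.
Qed.

Lemma chain_sumS x r k :
  chain_sum x r k.+1 =
  \sum_(a : 'I_(bnd x) | [&& (r < a)%N, a%:R <= x & (r %| a - 1)%N])
    chain_sum x a k.
Proof.
rewrite /chain_sum big_ffunS [RHS]big_mkcond; apply: eq_bigr => a _.
under eq_bigl => g do rewrite qseq_ffun_cons div_chain_cons.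
under eq_bigr => g _ do rewrite qseq_ffun_cons.
case: ifP => [/and3P[-> -> ->] // | a_out]; apply: big_pred0 => g.
by apply: contraFF a_out => /and4P[-> -> -> _].
Qed.

Lemma natr_ord_bnd_le x (a : 'I_(bnd x)) : 0 <= x -> a%:R <= x.
Proof. by move=> x_ge0; rewrite -truncn_ge_nat // -ltnS ltn_ord. Qed.

Lemma chain_sum_le x r k : 1 <= x -> (0 < r)%N ->
  chain_sum x r k <= (ln x + 1) ^+ k / r%:R.
Proof.
move=> x_ge1; have x_ge0 : 0 <= x := le_trans ler01 x_ge1.
have t_gt0 : (0 < Num.truncn x)%N by rewrite truncn_gt0.
elim: k r => [|k IH] r r_gt0; first by rewrite chain_sum0 expr0 mul1r.
rewrite chain_sumS.
apply: (@le_trans _ _ (\sum_(a : 'I_(bnd x) | (r < a)%N && (r %| a - 1)%N)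
    (ln x + 1) ^+ k / a%:R)).
  rewrite (eq_bigl (fun a : 'I_(bnd x) => (r < a)%N && (r %| a - 1)%N)).
    by apply: ler_sum => a /andP[ra _]; apply: IH; apply: ltn_trans ra.
  by move=> a; rewrite natr_ord_bnd_le.
rewrite -mulr_sumr exprSr -mulrA ler_wpM2l ?exprn_ge0 ?addr_ge0 ?ln_ge0 //.
apply: le_trans (sum_inv_1_mod_le _ _ t_gt0 r_gt0) _.
rewrite addrC ler_wpM2r ?invr_ge0 // lerD2r ler_ln ?posrE ?ltr0n //.
  by rewrite truncn_le.
exact: lt_le_trans ltr01 x_ge1.
Qed.

End Chains.

Lemma Rsum_le_chain_sum {R : realType} (y : R) (r k : nat) (x : R) :
  Rsum y r k x <= chain_sum x r k.
Proof.
rewrite /Rsum /chain_sum.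
apply: (@ler_sum_inj _ _ _ id (@good_chain R y r k x (bnd x))) => //.
by move=> q /and5P[_ ? _ ? ?]; apply/and3P.
Qed.

Lemma Ssum_le_mul_Rsum {R : realType} (y : R) (r k : nat) (x : R) :
  0 <= x -> (0 < r)%N -> Ssum y r k x <= x * Rsum y r k x.
Proof.
move=> x_ge0 r_gt0; rewrite /Ssum /Rsum mulr_sumr.
apply: ler_sum => q /and5P[_ _ q_prime _ _].
have Q_gt0 : (0 < qlast r q)%N.
  rewrite /qlast; case/predU1P: (mem_last r (qseq q)) => [-> //|].
  by move/(allP q_prime)/prime_gt0.
rewrite (eq_bigl (fun n : 'I_(bnd x) => (0 < n)%N && (qlast r q %| n)%N));
  last first.
  move=> n; rewrite natr_ord_bnd_le //=; have [n_gt0|] := ltnP 0 n => //=.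
  by rewrite andb_idl // => /(dvdn_leq n_gt0).
rewrite sum1_multiples // -[x * _]/(x / _) ler_pdivlMr ?ltr0n // -natrM.
apply: le_trans (_ : (Num.truncn x)%:R <= x); last by rewrite truncn_le.
by rewrite ler_nat leq_trunc_div.
Qed.

Theorem lemma4p2 (R : realType) (r k : nat) (x y : R) :
  (0 < r)%N -> (0 < k)%N -> 1 <= x ->
  Rsum y r k x <= (ln x + 1) ^+ k / r%:R /\
  Ssum y r k x <= x * (ln x + 1) ^+ k / r%:R.
Proof.
move=> r_gt0 _ x_ge1; have x_ge0 : 0 <= x := le_trans ler01 x_ge1.
have Rsum_le : Rsum y r k x <= (ln x + 1) ^+ k / r%:R.
  exact: le_trans (Rsum_le_chain_sum y r k x) (chain_sum_le x r k x_ge1 r_gt0).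
split=> //; rewrite -mulrA.
by apply: le_trans (Ssum_le_mul_Rsum y r k x x_ge0 r_gt0) _; rewrite ler_wpM2l.
Qed.
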